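(* Let $G=(\mathfrak{N},\mathfrak{T},\mathfrak{R},\mathfrak{S})$ be a context-free grammar, $\Sigma$ a set of characters, $(\textsl{Lex},\textsl{Sel})$ a local lexing and $D\in\Sigma^*$. For $k\in\{0,\ldots,|D|\}$ let $\mathcal{Z}_k^\infty=\bigcup_{u\ge0}\mathcal{Z}_k^u$. Then for every token sequence $p$: $p\in\mathfrak{P}$ if and only if (a) for all $0\le i<|p|$, $p_i\in\mathcal{Z}_{|\overline{p_0\ldots p_{i-1}}|}^{\infty}$, and (b) $[p]\in\mathcal{L}_{\text{prefix}}$.
   Context: Notation: for a set $U$, $U^*$ is the set of finite sequences over $U$, $\varepsilon$ the empty sequence, juxtaposition is concatenation, $|\alpha|$ the length and $\alpha_i$ ($0\le i<|\alpha|$) the $i$-th element. A context-free grammar $(\mathfrak{N},\mathfrak{T},\mathfrak{R},\mathfrak{S})$ has disjoint nonterminals $\mathfrak{N}$ and terminals $\mathfrak{T}$, rules $\mathfrak{R}\subseteq\mathfrak{N}\times(\mathfrak{N}\cup\mathfrak{T})^*$ (written $N\rightarrow\alpha$), start symbol $\mathfrak{S}$; $\overset{*}{\Rightarrow}$ is the reflexive-transitive closure of one-step rewriting by rules. $\mathcal{L}_{\text{prefix}}=\{w\in\mathfrak{T}^*\mid\exists\alpha\in(\mathfrak{N}\cup\mathfrak{T})^*.\ \mathfrak{S}\overset{*}{\Rightarrow}w\alpha\}$. Tokens: a token is a pair $x=(t,c)\in\mathfrak{T}\times\Sigma^*$; $[x]=t$, $\overline{x}=c$. For a token sequence (path) $q=x_0\ldots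 x_r$, $[q]=[x_0]\ldots[x_r]$ and $\overline{q}=\overline{x_0}\ldots\overline{x_r}$ (for $i=0$, $\overline{p_0\ldots p_{i-1}}$ is the empty sequence). Local lexing: a pair $(\textsl{Lex},\textsl{Sel})$ where $\textsl{Lex}$ assigns to each $t\in\mathfrak{T}$ a function $\textsl{Lex}(t)$ which, given $D\in\Sigma^*$ and $k\in\{0,\ldots,|D|\}$, returns a set of tokens $(t,c)$ with $k+|c|\le|D|$ and $c_i=D_{k+i}$ for $0\le i\le|c|-1$; and $\textsl{Sel}$ maps any two token sets $A\subseteq B$ to a token set with $A\subseteq\textsl{Sel}(A,B)\subseteq B$. Path sets: $\operatorname{limit} f\,X=\bigcup_{n\ge0}f^n(X)$. $\operatorname{Append}_k\,T\,P=P\cup\{pt\mid p\in P,\ |\overline{p}|=k,\ t\in T,\ [pt]\in\mathcal{L}_{\text{prefix}}\}$. For $k\in\{0,\ldots,|D|\}$: $\mathcal{X}_k=\{x\in\mathfrak{T}\times\Sigma^*\mid x\in\textsl{Lex}([x])(D,k)\}$; $\mathcal{P}_0^0=\{\varepsilon\}$; $\mathcal{W}_k^u=\{x\in\mathcal{X}_k\mid\exists p\in\mathcal{P}_k^u.\ |\overline{p}|=k\wedge[px]\in\mathcal{L}_{\text{prefix}}\}$; $\mathcal{Z}_k^0=\emptyset$; $\mathcal{Z}_k^{u+1}=\textsl{Sel}(\mathcal{Z}_k^u,\mathcal{W}_k^u)$; $\mathcal{P}_k^{u+1}=\operatorname{limit}(\operatorname{Append}_k\,\mathcal{Z}_k^{u+1})\,\mathcal{P}_k^u$;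 $\mathcal{P}_k^\infty=\bigcup_u\mathcal{P}_k^u$; $\mathcal{P}_{k+1}^0=\mathcal{P}_k^\infty$. Finally $\mathfrak{P}=\mathcal{P}_{|D|}^\infty$. *)

(* sets are predicates, sequences are lists. *)
From Stdlib Require Import List Arith.
Import ListNotations.
Set Implicit Arguments.

(* Nonterminals NT and terminals TT are disjoint by construction (sum type). *)
Inductive symbol (NT TT : Type) : Type :=
  | Nsym : NT -> symbol NT TT
  | Tsym : TT -> symbol NT TT.
Arguments Nsym {NT TT} _.
Arguments Tsym {NT TT} _.

Record grammar (NT TT : Type) : Type := Grammar {
  g_rules : NT -> list (symbol NT TT) -> Prop;
  g_start : NT
}.

Definition derives1 {NT TT} (G : grammar NT TT) (a b : list (symbol NT TT)) : Prop :=
  exists (u v : list (symbol NT TT)) (N : NT) (alpha : list (symbol NT TT)),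
    g_rules G N alpha /\ a = u ++ Nsym N :: v /\ b = u ++ alpha ++ v.

Inductive derives {NT TT} (G : grammar NT TT) :
    list (symbol NT TT) -> list (symbol NT TT) -> Prop :=
  | derives_refl : forall a, derives G a a
  | derives_step : forall a b c, derives1 G a b -> derives G b c -> derives G a c.

Definition Lprefix {NT TT} (G : grammar NT TT) (w : list TT) : Prop :=
  exists alpha, derives G [Nsym (g_start G)] (map Tsym w ++ alpha).

Definition token (TT Sigma : Type) : Type := (TT * list Sigma)%type.
Definition tset (TT Sigma : Type) : Type := token TT Sigma -> Prop.
Definition pset (TT Sigma : Type) : Type := list (token TT Sigma) -> Prop.

Definition tsubset {TT Sigma} (A B : tset TT Sigma) : Prop := forall x, A x -> B x.

(* [q] : sequence of terminals;  overline q : concatenated character string *)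
Definition terms {TT Sigma} (q : list (token TT Sigma)) : list TT := map fst q.
Definition chars {TT Sigma} (q : list (token TT Sigma)) : list Sigma := concat (map snd q).

Record local_lexing (TT Sigma : Type) : Type := LocalLexing {
  Lex : TT -> list Sigma -> nat -> tset TT Sigma;
  Sel : tset TT Sigma -> tset TT Sigma -> tset TT Sigma;
  Lex_spec : forall (t : TT) (D : list Sigma) (k : nat) (x : token TT Sigma),
    k <= length D -> Lex t D k x ->
      fst x = t /\ k + length (snd x) <= length D /\
      (forall i, i < length (snd x) -> nth_error (snd x) i = nth_error D (k + i));
  Sel_spec : forall A B : tset TT Sigma, tsubset A B ->
      tsubset A (Sel A B) /\ tsubset (Sel A B) B
}.

Section Paths.
Context {NT TT Sigma : Type} (G : grammar NT TT) (LL : local_lexing TT Sigma)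
        (D : list Sigma).

Definition limit (f : pset TT Sigma -> pset TT Sigma) (X : pset TT Sigma)
  : pset TT Sigma := fun p => exists n, Nat.iter n f X p.

Definition Append (k : nat) (T : tset TT Sigma) (P : pset TT Sigma) : pset TT Sigma :=
  fun q => P q \/ exists p t, q = p ++ [t] /\ P p /\ length (chars p) = k /\ T t /\
                          Lprefix G (terms (p ++ [t])).

Definition Xk (k : nat) : tset TT Sigma := fun x => Lex LL (fst x) D k x.

Definition Wk (k : nat) (P : pset TT Sigma) : tset TT Sigma :=
  fun x => Xk k x /\ exists p, P p /\ length (chars p) = k /\ Lprefix G (terms (p ++ [x])).

(* (Z_k^u, P_k^u) |-> (Z_k^{u+1}, P_k^{u+1}) *)
Definition step (k : nat) (ZP : tset TT Sigma * pset TT Sigma)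
  : tset TT Sigma * pset TT Sigma :=
  let Z' := Sel LL (fst ZP) (Wk k (snd ZP)) in
  (Z', limit (Append k Z') (snd ZP)).

Fixpoint P0 (k : nat) : pset TT Sigma :=
  match k with
  | 0 => fun p => p = []
  | S k' => fun p => exists u, snd (Nat.iter u (step k') (fun _ => False, P0 k')) p
  end.

(* (Z_k^u, P_k^u), with Z_k^0 = empty *)
Definition ZP (k u : nat) : tset TT Sigma * pset TT Sigma :=
  Nat.iter u (step k) (fun _ => False, P0 k).

Definition Zk (k u : nat) : tset TT Sigma := fst (ZP k u).
Definition Pk (k u : nat) : pset TT Sigma := snd (ZP k u).
Definition Zinf (k : nat) : tset TT Sigma := fun x => exists u, Zk k u x.
Definition Pinf (k : nat) : pset TT Sigma := fun p => exists u, Pk k u p.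

Definition frakP : pset TT Sigma := Pinf (length D).

End Paths.

From Stdlib Require Import List Arith Lia.
Import ListNotations.

(* Sel never drops a token it has selected and Append only adds paths, so
   Z_k^u and P_k^u grow with u, and P_k^∞ ⊆ P_(k+1)^∞.  Conversely, Append_j
   only extends paths whose characters end exactly at j, so a path of P_j^∞
   ending before j already lies in P_(j-1)^∞.  Hence, for every k, P_k^∞
   consists of the prefix-valid paths each of whose tokens lies in Z^∞ at the
   position where it starts: one inclusion by induction on the construction of
   P_k^u, the other by induction on the path, appending its last token at a
   stage where both the shorter path and the token are already present. *)

Lemma chain_mono {A : Type} (F : nat -> A -> Prop) :
  (forall n a, F n a -> F (S n) a) -> forall m n a, m <= n -> F m a -> F n a.
Proof. intros HS m n a Hmn; induction Hmn; auto. Qed.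

Section PathSets.
Context {NT TT Sigma : Type} (G : grammar NT TT) (LL : local_lexing TT Sigma)
        (D : list Sigma).

Lemma chars_snoc (p : list (token TT Sigma)) (t : token TT Sigma) :
  chars (p ++ [t]) = chars p ++ snd t.
Proof. unfold chars. rewrite map_app, concat_app; simpl. now rewrite app_nil_r. Qed.

Lemma Lprefix_nil : Lprefix G [].
Proof. exists [Nsym (g_start G)]. constructor. Qed.

Lemma Lprefix_snoc (w : list TT) (t : TT) : Lprefix G (w ++ [t]) -> Lprefix G w.
Proof.
  intros [alpha H]. exists (Tsym t :: alpha).
  now rewrite map_app, <- app_assoc in H.
Qed.

Lemma limit_incl (f : pset TT Sigma -> pset TT Sigma) (P : pset TT Sigma) q :
  P q -> limit f P q.
Proof. now exists 0. Qed.

Lemma limit_Append_snoc k (T : tset TT Sigma) (P : pset TT Sigma) p t :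
  P p -> length (chars p) = k -> T t -> Lprefix G (terms (p ++ [t])) ->
  limit (Append G k T) P (p ++ [t]).
Proof. intros. exists 1. right. now exists p, t. Qed.

Lemma limit_Append_ind k (T : tset TT Sigma) (P Q : pset TT Sigma) :
  (forall q, P q -> Q q) ->
  (forall p t, Q p -> length (chars p) = k -> T t ->
     Lprefix G (terms (p ++ [t])) -> Q (p ++ [t])) ->
  forall q, limit (Append G k T) P q -> Q q.
Proof.
  intros HP Hsnoc q [n Hn]. revert q Hn.
  induction n as [|n IH]; intros q Hq; simpl in Hq; auto.
  destruct Hq as [Hq | (p & t & -> & Hp & Hk & Ht & Hw)]; auto.
Qed.

Lemma Wk_mono k (P P' : pset TT Sigma) :
  (forall q, P q -> P' q) -> tsubset (Wk G LL D k P) (Wk G LL D k P').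
Proof. intros HP x [Hx (p & Hp & Hk & Hw)]. split; auto. now exists p; auto. Qed.

Lemma Pk_S k u q : Pk G LL D k u q -> Pk G LL D k (S u) q.
Proof. apply limit_incl. Qed.

Lemma Zk_sub_Wk k u : tsubset (Zk G LL D k u) (Wk G LL D k (Pk G LL D k u)).
Proof.
  induction u as [|u IH]; intros x Hx; [destruct Hx|].
  apply (Wk_mono k _ _ (Pk_S k u)). exact (proj2 (Sel_spec LL IH) x Hx).
Qed.

Lemma Zk_S k u x : Zk G LL D k u x -> Zk G LL D k (S u) x.
Proof. apply (proj1 (Sel_spec LL (Zk_sub_Wk k u))). Qed.

Lemma Pinf_S k q : Pinf G LL D k q -> Pinf G LL D (S k) q.
Proof. now exists 0. Qed.

Lemma Pk_short j u q : Pk G LL D j u q -> length (chars q) < j -> Pk G LL D j 0 q.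
Proof.
  revert q. induction u as [|u IH]; auto.
  apply (limit_Append_ind j _ _ (fun q => length (chars q) < j -> Pk G LL D j 0 q)); auto.
  intros p t _ Hp _ _ Hlt. rewrite chars_snoc, length_app in Hlt. lia.
Qed.

Lemma Pinf_restrict k j q :
  k <= j -> length (chars q) <= k -> Pinf G LL D j q -> Pinf G LL D k q.
Proof.
  intros Hkj Hq. induction Hkj as [|j Hkj IH]; auto.
  intros [u Hu]. apply IH. exact (Pk_short (S j) u q Hu ltac:(lia)).
Qed.

Definition admissible (k : nat) (q : list (token TT Sigma)) : Prop :=
  (forall (i : nat) (x : token TT Sigma),
      i < length q -> nth_error q i = Some x ->
      length (chars (firstn i q)) <= k /\
      Zinf G LL D (length (chars (firstn i q))) x)
  /\ Lprefix G (terms q).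

Lemma admissible_nil k : admissible k [].
Proof. split; [simpl; lia | apply Lprefix_nil]. Qed.

Lemma admissible_mono k k' q : k <= k' -> admissible k q -> admissible k' q.
Proof.
  intros Hk [Htok Hw]. split; auto. intros i x Hi Hx.
  destruct (Htok i x Hi Hx). split; auto. lia.
Qed.

Lemma admissible_snoc k q x :
  admissible k (q ++ [x]) <->
  admissible k q /\ length (chars q) <= k /\ Zinf G LL D (length (chars q)) x /\
  Lprefix G (terms (q ++ [x])).
Proof.
  assert (Hfirst : forall i, i <= length q -> firstn i (q ++ [x]) = firstn i q).
  { intros i Hi. rewrite firstn_app.
    replace (i - length q) with 0 by lia. apply app_nil_r. }
  assert (Hlast : firstn (length q) q = q) by apply firstn_all.
  assert (Hlen : length (q ++ [x]) = S (length q))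
    by (rewrite length_app; simpl; lia).
  split.
  - intros [Htok Hw].
    destruct (Htok (length q) x) as [Hk Hx];
      [lia | now rewrite nth_error_app2, Nat.sub_diag by lia |].
    rewrite Hfirst, Hlast in Hk, Hx by lia.
    refine (conj (conj _ _) (conj Hk (conj Hx Hw))).
    + intros i y Hi Hy. rewrite <- Hfirst by lia.
      apply Htok; [lia | now rewrite nth_error_app1].
    + unfold terms in Hw. rewrite map_app in Hw. exact (Lprefix_snoc _ _ Hw).
  - intros ([Htok _] & Hk & Hx & Hw). split; auto.
    intros i y Hi Hy. rewrite Hlen in Hi. rewrite Hfirst by lia.
    destruct (Nat.eq_dec i (length q)) as [-> | Hne].
    + rewrite nth_error_app2, Nat.sub_diag in Hy by lia.
      injection Hy as <-. now rewrite Hlast.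
    + rewrite nth_error_app1 in Hy by lia. apply Htok; auto. lia.
Qed.

Lemma Pk_S_admissible k u :
  (forall q, Pk G LL D k u q -> admissible k q) ->
  forall q, Pk G LL D k (S u) q -> admissible k q.
Proof.
  intros IH. apply (limit_Append_ind k _ _ (admissible k)); auto.
  intros p t Hp Hk Ht Hw. apply admissible_snoc. rewrite Hk.
  refine (conj Hp (conj (le_n k) (conj _ Hw))). now exists (S u).
Qed.

Lemma Pk_admissible k u q : Pk G LL D k u q -> admissible k q.
Proof.
  revert u q. induction k as [|k IHk]; intros u.
  all: induction u as [|u IHu]; [intros q Hq | apply Pk_S_admissible, IHu].
  - change (q = []) in Hq. subst q. apply admissible_nil.
  - destruct Hq as [u' Hq]. apply (admissible_mono k); [lia | exact (IHk u' q Hq)].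
Qed.

Lemma admissible_Pinf k q : admissible k q -> Pinf G LL D k q.
Proof.
  induction q as [|x q IH] using rev_ind; intros Hq.
  - apply (chain_mono (Pinf G LL D) Pinf_S 0 k); [lia|]. now exists 0.
  - apply admissible_snoc in Hq as (Hq & Hk & [u2 Hx] & Hw).
    set (j := length (chars q)) in *.
    destruct (Pinf_restrict j k q Hk (le_n j) (IH Hq)) as [u1 Hp].
    apply (chain_mono (Pinf G LL D) Pinf_S j k); auto.
    exists (S (u1 + u2)).
    apply (limit_Append_snoc j (Zk G LL D j (S (u1 + u2)))); auto.
    + apply (chain_mono (Pk G LL D j) (Pk_S j) u1); auto. lia.
    + apply (chain_mono (Zk G LL D j) (Zk_S j) u2); auto. lia.
Qed.

Lemma Pinf_iff_admissible k q : Pinf G LL D k q <-> admissible k q.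
Proof.
  split; [intros [u Hu]; exact (Pk_admissible k u q Hu) | apply admissible_Pinf].
Qed.

End PathSets.

Theorem theorem4 (NT TT Sigma : Type) (G : grammar NT TT)
    (LL : local_lexing TT Sigma) (D : list Sigma) (p : list (token TT Sigma)) :
  frakP G LL D p <->
  ((forall (i : nat) (x : token TT Sigma),
       i < length p -> nth_error p i = Some x ->
       length (chars (firstn i p)) <= length D /\
       Zinf G LL D (length (chars (firstn i p))) x)
   /\ Lprefix G (terms p)).
Proof. exact (Pinf_iff_admissible G LL D (length D) p). Qed.
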